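(* Let $\mathbf{P}$ be a poset of width $w$ and let $k\ge0$. Then $|P_k|\le 2\,w^{(3w)^k}$.
   Context: The width of a poset is the maximum size of an antichain. Sets $P_k$: $L_0=\min(\mathbf{P})$, $U_0=\max(\mathbf{P})\setminus L_0$, $P_0=L_0\cup U_0$. For $i\ge1$, call $R\subseteq P_{i-1}$ admissible if $R\cap L_{i-1}$ is downward closed within $L_{i-1}$ and $R\cap U_{i-1}$ is upward closed within $U_{i-1}$; for admissible $R$ let $P_{i-1,R}=\{p\in P: \forall l\in L_{i-1}\,(l\le p\iff l\in R)\text{ and }\forall u\in U_{i-1}\,(p\le u\iff u\in R)\}$. Then $L_i=L_{i-1}\cup\bigcup_R\min(P_{i-1,R})$, $U_i=(U_{i-1}\cup\bigcup_R\max(P_{i-1,R}))\setminus L_i$ (unions over admissible $R$; $\min$ and $\max$ are taken in the induced subposet on $P_{i-1,R}$), and $P_i=L_i\cup U_i$. *)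

From HB Require Import structures.
From mathcomp Require Import all_boot all_order.
Set Implicit Arguments. Unset Strict Implicit. Unset Printing Implicit Defensive.
Import Order.Theory.
Local Open Scope order_scope.

Section Layers.
Context {disp : Order.disp_t} {T : finPOrderType disp}.

Definition antichain (A : {set T}) : bool :=
  [forall x in A, forall y in A, (x >=< y) ==> (x == y)].

Definition width : nat := \max_(A : {set T} | antichain A) #|A|.

Definition pmin (S : {set T}) : {set T} :=
  [set x in S | [forall y in S, (y <= x) ==> (y == x)]].
Definition pmax (S : {set T}) : {set T} :=
  [set x in S | [forall y in S, (x <= y) ==> (y == x)]].

Definition admissible (L U R : {set T}) : bool :=
  [&& R \subset L :|: U,
      [forall x in L, forall y in L, (x <= y) && (y \in R) ==> (x \in R)] &
      [forall x in U, forall y in U, (x <= y) && (x \in R) ==> (y \in R)]].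

Definition PR (L U R : {set T}) : {set T} :=
  [set p | [forall l in L, (l <= p) == (l \in R)] &&
           [forall u in U, (p <= u) == (u \in R)]].

Definition step (LU : {set T} * {set T}) : {set T} * {set T} :=
  let L := LU.1 in let U := LU.2 in
  let L' := L :|: \bigcup_(R : {set T} | admissible L U R) pmin (PR L U R) in
  let U' := (U :|: \bigcup_(R : {set T} | admissible L U R) pmax (PR L U R)) :\: L' in
  (L', U').

Definition LU0 : {set T} * {set T} :=
  let L0 := pmin [set: T] in (L0, pmax [set: T] :\: L0).

Definition LUk (k : nat) : {set T} * {set T} := iter k step LU0.

Definition Lk (k : nat) : {set T} := (LUk k).1.
Definition Uk (k : nat) : {set T} := (LUk k).2.
Definition Pk (k : nat) : {set T} := Lk k :|: Uk k.

End Layers.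

From HB Require Import structures.
From mathcomp Require Import all_boot all_order zify.

Set Implicit Arguments. Unset Strict Implicit. Unset Printing Implicit Defensive.
Import Order.Theory.

(* Each step adds, for every admissible R, the antichains min(P_{k,R}) and max(P_{k,R}),
   so |P_{k+1}| <= |P_k| + 2w N_k with N_k the number of admissible R.  An admissible R
   is the down-closure in L of max(R ∩ L) together with the up-closure in U of
   min(R ∩ U); as these are two antichains, N_k <= (|P_k| + 1)^(2w), besides the
   trivial N_k <= 2^|P_k|.  Iterating gives the bound for w >= 2.  For w = 1 the poset
   is a chain and the construction is constant from P_0 = {min, max} on. *)

Lemma leq_card_bigcup (T : finType) (I : finType) (P : pred I) (F : I -> {set T}) :
  #|\bigcup_(i | P i) F i| <= \sum_(i | P i) #|F i|.
Proof.
elim/big_rec2: _ => [|i A n _ IH]; first by rewrite cards0.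
by apply: leq_trans (leq_card_setU _ _) _; rewrite leq_add2l.
Qed.

Definition bounded_subsets (T : finType) (X : {set T}) (m : nat) : {set {set T}} :=
  [set S : {set T} | (S \subset X) && (#|S| <= m)].

Lemma card_bounded_subsets (T : finType) (X : {set T}) m :
  #|bounded_subsets X m| <= #|X|.+1 ^ m.
Proof.
elim: m => [|m IH].
  rewrite expn0 -(cards1 (@set0 T)); apply: subset_leq_card.
  by apply/subsetP => S; rewrite !inE leqn0 cards_eq0 => /andP[_ ->].
pose add1 := [set p.1 |: p.2 | p in setX X (bounded_subsets X m)].
have sub : bounded_subsets X m.+1 \subset bounded_subsets X m :|: add1.
  apply/subsetP => S; rewrite !inE => /andP[SX].
  rewrite leq_eqVlt ltnS => /orP[/eqP cS|->]; last by rewrite SX.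
  have /card_gt0P[x xS] : 0 < #|S| by rewrite cS.
  apply/orP; right; apply/imsetP; exists (x, S :\ x); last by rewrite /= setD1K.
  rewrite !inE /= (subsetP SX _ xS) (subset_trans (subsetDl _ _) SX) /=.
  by move: cS; rewrite (cardsD1 x S) xS add1n => -[->].
apply: leq_trans (subset_leq_card sub) _.
apply: leq_trans (leq_card_setU _ _) _.
apply: leq_trans (leq_add (leqnn _) (leq_imset_card _ _)) _.
by rewrite cardsX expnS mulSn leq_add ?leq_mul.
Qed.

Section Extremal.
Context {disp : Order.disp_t} {T : finPOrderType disp}.
Implicit Types (A S : {set T}) (x y : T).

Lemma antichain_antisym A :
  {in A &, forall x y, (x <= y)%O -> x = y} -> antichain A.
Proof.
move=> antiA; apply/forall_inP => x xA; apply/forall_inP => y yA.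
by apply/implyP => /orP[/antiA -> | /antiA ->].
Qed.

Lemma pmin_antichain S : antichain (pmin S).
Proof.
apply: antichain_antisym => x y; rewrite !inE => /andP[xS _] /andP[_ /forall_inP ymin] xy.
by apply/eqP; move/implyP: (ymin x xS); apply.
Qed.

Lemma pmax_antichain S : antichain (pmax S).
Proof.
apply: antichain_antisym => x y; rewrite !inE => /andP[_ /forall_inP xmax] /andP[yS _] xy.
by apply/esym/eqP; move/implyP: (xmax y yS); apply.
Qed.

Lemma leq_card_width A : antichain A -> #|A| <= width (T := T).
Proof. by move=> antiA; rewrite (@leq_bigmax_cond _ antichain (fun B => #|B|) A). Qed.

Lemma card_pmin S : #|pmin S| <= width (T := T).
Proof. exact/leq_card_width/pmin_antichain. Qed.

Lemma card_pmax S : #|pmax S| <= width (T := T).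
Proof. exact/leq_card_width/pmax_antichain. Qed.

Lemma width_gt0 x : 0 < width (T := T).
Proof.
apply: leq_trans (leq_card_width (A := [set x]) _); first by rewrite cards1.
by apply: antichain_antisym => y z /set1P -> /set1P ->.
Qed.

(* A minimal element below x: take y <= x in S with the fewest elements of S below it. *)
Lemma pmin_below S x : x \in S -> exists2 y, y \in pmin S & (y <= x)%O.
Proof.
move=> xS; pose D y := [set z in S | (z <= y)%O].
have [|y /andP[yS yx] ymin] := @arg_minnP _ x [pred y | (y \in S) && (y <= x)%O]
  (fun y => #|D y|); first by rewrite /= xS lexx.
exists y => //; rewrite inE yS; apply/forall_inP => z zS; apply/implyP => zy.
have Dzy : D z \subset D y.
  by apply/subsetP => t; rewrite !inE => /andP[-> tz]; exact: le_trans zy.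
have /eqP DzE : D z == D y.
  by rewrite eqEcard Dzy ymin //= zS (le_trans zy yx).
have : y \in D z by rewrite DzE inE yS lexx.
by rewrite inE => /andP[_ yz]; rewrite eq_le zy yz.
Qed.

End Extremal.

Lemma pmax_above {disp : Order.disp_t} {T : finPOrderType disp} (S : {set T}) x :
  x \in S -> exists2 y, y \in pmax S & (x <= y)%O.
Proof. move=> xS; have [y ym xy] := @pmin_below _ T^d S x xS; by exists y. Qed.

Section Admissible.
Context {disp : Order.disp_t} {T : finPOrderType disp}.
Variables L U : {set T}.

Definition admissibles : {set {set T}} := [set R | admissible L U R].

Lemma card_admissibles_pow : #|admissibles| <= 2 ^ #|L :|: U|.
Proof.
rewrite -card_powerset; apply/subset_leq_card/subsetP => R.
by rewrite !inE => /and3P[].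
Qed.

Definition adm_frontier (R : {set T}) : {set T} := pmax (R :&: L) :|: pmin (R :&: U).

Definition adm_closure (F : {set T}) : {set T} :=
  [set x in L | [exists y in F :&: L, (x <= y)%O]] :|:
  [set x in U | [exists y in F :&: U, (y <= x)%O]].

Lemma adm_frontierK R : admissible L U R -> adm_closure (adm_frontier R) = R.
Proof.
case/and3P => RLU /forall_inP downL /forall_inP upU.
have frontierR y : y \in adm_frontier R -> y \in R.
  by rewrite !inE => /orP[] /andP[/andP[]].
apply/setP => x; apply/idP/idP.
  rewrite !inE => /orP[] /andP[xX /exists_inP[y /setIP[yF yX] xy]].
    by move/forall_inP: (downL x xX) => /(_ y yX); rewrite xy frontierR.
  by move/forall_inP: (upU y yX) => /(_ x xX); rewrite xy frontierR.
move=> xR; have /setUP[xL|xU] := subsetP RLU x xR.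
  have [|y ymax xy] := pmax_above (S := R :&: L) (x := x); first by rewrite inE xR.
  have /setIP[_ yL] : y \in R :&: L by move: ymax; rewrite inE => /andP[].
  apply/setUP; left; rewrite inE xL; apply/exists_inP; exists y => //.
  by rewrite inE yL andbT inE ymax.
have [|y ymin yx] := pmin_below (S := R :&: U) (x := x); first by rewrite inE xR.
have /setIP[_ yU] : y \in R :&: U by move: ymin; rewrite inE => /andP[].
apply/setUP; right; rewrite inE xU; apply/exists_inP; exists y => //.
by rewrite inE yU andbT inE ymin orbT.
Qed.

Lemma card_admissibles_poly : #|admissibles| <= #|L :|: U|.+1 ^ (2 * width (T := T)).
Proof.
have frontier_inj : {in admissibles &, injective adm_frontier}.
  move=> R1 R2; rewrite !inE => adm1 adm2 eqF.
  by rewrite -(adm_frontierK adm1) -(adm_frontierK adm2) eqF.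
rewrite -(card_in_imset frontier_inj).
apply/(leq_trans _ (card_bounded_subsets _ _))/subset_leq_card/subsetP.
move=> _ /imsetP[R _ ->]; rewrite inE; apply/andP; split.
  by apply/subsetP => y; rewrite !inE => /orP[] /andP[/andP[_ ->]] //; rewrite orbT.
apply: leq_trans (leq_card_setU _ _) _.
by rewrite mul2n -addnn leq_add ?card_pmax ?card_pmin.
Qed.

End Admissible.

Section Layers.
Context {disp : Order.disp_t} {T : finPOrderType disp}.

Lemma card_bigcup_admissibles (L U : {set T}) (F : {set T} -> {set T}) :
  (forall R, #|F R| <= width (T := T)) ->
  #|\bigcup_(R | admissible L U R) F R| <= #|admissibles L U| * width (T := T).
Proof.
move=> cardF; apply: leq_trans (leq_card_bigcup _ _) _.
rewrite (eq_bigl (fun R => R \in admissibles L U)); last by move=> R; rewrite inE.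
by rewrite -sum_nat_const leq_sum.
Qed.

Lemma card_PkS k :
  #|Pk (T := T) k.+1| <=
    #|Pk (T := T) k| + 2 * width (T := T) * #|admissibles (Lk (T := T) k) (Uk k)|.
Proof.
rewrite /Pk /Lk /Uk /LUk iterS -/(LUk k) /step /=.
set L := (LUk k).1; set U := (LUk k).2.
set BL := \bigcup_(R | admissible L U R) pmin (PR L U R).
set BU := \bigcup_(R | admissible L U R) pmax (PR L U R).
have sub : (L :|: BL) :|: ((U :|: BU) :\: (L :|: BL)) \subset (L :|: U) :|: (BL :|: BU).
  apply/subsetP => x; rewrite !inE.
  by case: (x \in L); case: (x \in U); case: (x \in BL); case: (x \in BU).
apply: leq_trans (subset_leq_card sub) _.
apply: leq_trans (leq_card_setU _ _) _; rewrite leq_add2l.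
apply: leq_trans (leq_card_setU _ _) _.
rewrite mulnAC -mulnA mul2n -addnn leq_add //.
  exact: card_bigcup_admissibles (fun R => card_pmin _).
exact: card_bigcup_admissibles (fun R => card_pmax _).
Qed.

Lemma card_P0 : #|Pk (T := T) 0| <= 2 * width (T := T).
Proof.
apply: leq_trans (leq_card_setU _ _) _.
rewrite mul2n -addnn leq_add ?card_pmin //.
exact: leq_trans (subset_leq_card (subsetDl _ _)) (card_pmax _).
Qed.

Section Chain.
Hypothesis width_le1 : width (T := T) <= 1.

Lemma chain_comparable (x y : T) : (x >=< y)%O.
Proof.
apply/negPn/negP => xNy.
have neq_xy : x != y by apply: contraNneq xNy => ->; exact: comparablexx.
suff : 2 <= width (T := T) by rewrite leqNgt ltnS width_le1.
apply: leq_trans (leq_card_width (A := [set x; y]) _); first by rewrite cards2 neq_xy.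
apply: antichain_antisym => a b /set2P[] -> /set2P[] -> // le_ab; exfalso.
  by move: xNy; rewrite /Order.comparable le_ab.
by move: xNy; rewrite /Order.comparable le_ab orbT.
Qed.

Let L0 : {set T} := pmin [set: T].
Let U0 : {set T} := pmax [set: T] :\: L0.

Lemma L0_le l p : l \in L0 -> (l <= p)%O.
Proof.
rewrite inE => /andP[_ /forall_inP lmin].
have /orP[//|pl] := chain_comparable l p.
by move/implyP: (lmin p (in_setT p)) => /(_ pl)/eqP <-.
Qed.

Lemma U0_ge u p : u \in U0 -> (p <= u)%O.
Proof.
rewrite !inE => /andP[_ /forall_inP umax].
have /orP[up|//] := chain_comparable u p.
by move/implyP: (umax p (in_setT p)) => /(_ up)/eqP ->.
Qed.

(* Every element lies above L0 and below U0, so P_{0,R} is empty or all of T. *)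
Lemma PR0_const R p q : (p \in PR L0 U0 R) = (q \in PR L0 U0 R).
Proof.
suff mem_PR r : (r \in PR L0 U0 R) = [forall l in L0, l \in R] && [forall u in U0, u \in R].
  by rewrite !mem_PR.
rewrite inE; congr andb; apply: eq_forallb_in => z zX.
  by rewrite L0_le.
by rewrite U0_ge.
Qed.

Lemma step_LU0 : step LU0 = LU0 (T := T).
Proof.
have minPR R : pmin (PR L0 U0 R) \subset L0.
  apply/subsetP => x; rewrite inE => /andP[xP /forall_inP xmin].
  rewrite !inE; apply/forall_inP => y _.
  by apply: xmin; rewrite (PR0_const _ _ x).
have maxPR R : pmax (PR L0 U0 R) \subset pmax [set: T].
  apply/subsetP => x; rewrite inE => /andP[xP /forall_inP xmax].
  rewrite !inE; apply/forall_inP => y _.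
  by apply: xmax; rewrite (PR0_const _ _ x).
rewrite /step /LU0 /= -/L0 -/U0.
rewrite (setUidPl (_ : _ \subset L0)); last by apply/bigcupsP => R _.
congr pair; apply/setP => x; rewrite !in_setD in_setU in_setD.
case: (x \in L0) => //=; apply/orP/idP => [[//|] | ->]; last by left.
by case/bigcupP => R _ /(subsetP (maxPR R)).
Qed.

Lemma card_Pk_chain k : #|Pk (T := T) k| <= 2.
Proof.
have -> : Pk (T := T) k = Pk 0.
  rewrite /Pk /Lk /Uk; suff -> : LUk (T := T) k = LU0 by [].
  by elim: k => [//|k IH]; rewrite /LUk iterS -/(LUk k) IH step_LU0.
by apply: leq_trans card_P0 _; rewrite -[leqRHS]muln1 leq_mul2l width_le1 orbT.
Qed.
End Chain.
End Layers.

Lemma layer_arith0 w : 2 <= w -> 2 * w + 2 * w * 2 ^ (2 * w) <= 2 * w ^ (3 * w).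
Proof.
move=> w_ge2.
have le_pow2 : 2 ^ (2 * w) <= w ^ (2 * w) by rewrite leq_exp2r //; lia.
have pow_gt0 : 0 < w ^ (2 * w) by rewrite expn_gt0; lia.
have le_pow3 : w * (w * w ^ (2 * w)) <= w ^ (3 * w).
  by rewrite -!expnS leq_pexp2l //; lia.
move: le_pow2 pow_gt0 le_pow3; move: (2 ^ (2 * w)) (w ^ (2 * w)) (w ^ (3 * w)).
nia.
Qed.

(* With B := w ^ ((m + 2) * 2w): (n + 1) ^ 2w <= B and n <= 2 B, while w ^ 2 * B <= w ^ (3wm). *)
Lemma layer_arithS w m n : 2 <= w -> 6 <= m -> n <= 2 * w ^ m ->
  n + 2 * w * n.+1 ^ (2 * w) <= 2 * w ^ (3 * w * m).
Proof.
move=> w_ge2 m_ge6 n_le.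
have powm_gt0 : 0 < w ^ m by rewrite expn_gt0; lia.
have nS_le : n.+1 <= w ^ (m + 2).
  rewrite expnD expnS expn1; move: powm_gt0 n_le; move: (w ^ m) => a.
  have : 4 <= w * w by nia.
  nia.
have le_B : n.+1 ^ (2 * w) <= w ^ ((m + 2) * (2 * w)).
  by rewrite (expnM w) leq_exp2r //; lia.
have powm_le : w ^ m <= w ^ ((m + 2) * (2 * w)) by rewrite leq_pexp2l //; nia.
have B_le : w * (w * w ^ ((m + 2) * (2 * w))) <= w ^ (3 * w * m).
  by rewrite -!expnS leq_pexp2l //; nia.
move: n_le le_B powm_le B_le.
move: (n.+1 ^ (2 * w)) (w ^ m) (w ^ ((m + 2) * (2 * w))) (w ^ (3 * w * m)) => X a B C.
move=> n_le X_le a_le B_le.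
have : w * X <= w * B by rewrite leq_mul2l X_le orbT.
have : (1 + w) * B <= (w * w) * B by rewrite leq_mul2r; nia.
lia.
Qed.

Lemma layer_bound_step w k n a : 2 <= w ->
  n <= 2 * w ^ ((3 * w) ^ k) -> a <= 2 ^ n -> a <= n.+1 ^ (2 * w) ->
  n + 2 * w * a <= 2 * w ^ ((3 * w) ^ k.+1).
Proof.
move=> w_ge2 n_le a_le_exp a_le_poly; case: k n_le => [|k] n_le.
  rewrite expn0 expn1 in n_le; rewrite expn1.
  apply: leq_trans _ (layer_arith0 w_ge2); rewrite leq_add // leq_mul2l.
  by rewrite (leq_trans a_le_exp) ?orbT // leq_pexp2l.
have m_ge6 : 6 <= (3 * w) ^ k.+1.
  by apply: leq_trans (leq_pexp2l _ (ltn0Sn k)); rewrite ?expn1; lia.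
rewrite expnS; apply: leq_trans _ (layer_arithS w_ge2 m_ge6 n_le).
by rewrite leq_add // leq_mul2l a_le_poly orbT.
Qed.

Theorem lemma3 (disp : Order.disp_t) (T : finPOrderType disp) (w k : nat) :
  width (T := T) = w ->
  #|Pk (T := T) k| <= 2 * w ^ ((3 * w) ^ k).
Proof.
move=> <-; have [->|[x _]] := set_0Vmem (Pk (T := T) k); first by rewrite cards0.
have [width_le1 | width_ge2] := leqP (width (T := T)) 1.
  have -> : width (T := T) = 1 by have := width_gt0 x; lia.
  by rewrite exp1n muln1 card_Pk_chain.
elim: k => [|k IH]; first by rewrite expn0 expn1 card_P0.
apply: leq_trans (card_PkS k) _; apply: layer_bound_step => //.
  exact: card_admissibles_pow.
exact: card_admissibles_poly.
Qed.
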